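(* Let $a:\mathbb{R}^n\to\mathbb{R}^m$ be differentiable with each component $a_i$ convex, and let $w\in\mathbb{R}^m$, $w\ge0$. Let $(x,s,y)$ be a point with $s,y\ge0$, $y^Ta(x)>0$ and $\Gamma_{\mathrm{far}}(x,y)\le1/(2R)$ for some $R\in(0,\infty)$, and suppose some minimizer $(\mu^*,x^* )$ (with corresponding $s^*$) of the problem $\min_{x,s,\mu}\mu$ subject to $a(x)+s=\mu w$, $s\ge0$, $\mu\ge0$ satisfies $\|x-x^*\|_\infty\le R$. Then the system $a(x)\le0$ has no solution $x\in\mathbb{R}^n$.
   Context: $\Gamma_{\mathrm{far}}(x,y)=\dfrac{\|\nabla a(x)^Ty\|_1}{a(x)^Ty}$, where $\nabla a(x)$ is the $m\times n$ Jacobian of $a$ at $x$. *)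

From HB Require Import structures.
From mathcomp Require Import all_boot all_order all_algebra.
From mathcomp Require Import all_classical all_reals all_analysis.
Set Implicit Arguments. Unset Strict Implicit. Unset Printing Implicit Defensive.
Import Order.TTheory GRing.Theory Num.Theory numFieldNormedType.Exports.
Local Open Scope classical_set_scope.
Local Open Scope ring_scope.

Definition vnonneg (R : realType) k (v : 'rV[R]_k) : Prop := forall i, 0 <= v 0 i.

Definition norm1 (R : realType) k (v : 'rV[R]_k) : R := \sum_(i < k) `|v 0 i|.
Definition norminf (R : realType) k (v : 'rV[R]_k) : R := \big[Num.max/0]_(i < k) `|v 0 i|.

Definition dotv (R : realType) k (u v : 'rV[R]_k) : R := \sum_(i < k) u 0 i * v 0 i.

(* MathComp's jacobian 'J a x is the n x m matrix with 'd a x v = v *m 'J a x,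
   i.e. the transpose of the paper's m x n Jacobian; hence
   grad a(x)^T y (a column n-vector) is (('J a x) *m y^T), here as a row: y *m ('J a x)^T. *)
Definition Gamma_far (R : realType) n m (a : 'rV[R]_n -> 'rV[R]_m)
  (x : 'rV[R]_n) (y : 'rV[R]_m) : R :=
  norm1 (y *m (jacobian a x)^T) / dotv y (a x).

Definition feasible (R : realType) n m (a : 'rV[R]_n -> 'rV[R]_m) (w : 'rV[R]_m)
  (mu : R) (x : 'rV[R]_n) (s : 'rV[R]_m) : Prop :=
  a x + s = mu *: w /\ vnonneg s /\ 0 <= mu.

Definition is_minimizer (R : realType) n m (a : 'rV[R]_n -> 'rV[R]_m) (w : 'rV[R]_m)
  (mu : R) (x : 'rV[R]_n) (s : 'rV[R]_m) : Prop :=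
  feasible a w mu x s /\
  forall mu' x' s', feasible a w mu' x' s' -> mu <= mu'.

From HB Require Import structures.
From mathcomp Require Import all_boot all_order all_algebra.
From mathcomp Require Import all_classical all_reals all_analysis.
From mathcomp Require Import ring lra.

Set Implicit Arguments.
Unset Strict Implicit.
Unset Printing Implicit Defensive.
Import Order.TTheory GRing.Theory Num.Theory numFieldNormedType.Exports.
Local Open Scope classical_set_scope.
Local Open Scope ring_scope.

(* If a(z) <= 0 for some z, then (0, z, -a(z)) is feasible, so the optimal
   value is 0 and the minimizer x' satisfies a(x') <= 0, whence y^T a(x') <= 0.
   On the other hand convexity of the a_i gives the first-order bound
   y^T a(x') >= y^T a(x) + y^T grad a(x) (x' - x), and by Hoelder the last
   term is at least -||grad a(x)^T y||_1 ||x' - x||_inf >= -y^T a(x) / 2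
   thanks to the bound on Gamma_far; so y^T a(x') >= y^T a(x) / 2 > 0. *)

Section DotProduct.
Variable R : realType.

Lemma dotvE k (u v : 'rV[R]_k) : dotv u v = (u *m v^T) 0 0.
Proof. by rewrite /dotv mxE; apply: eq_bigr => i _; rewrite mxE. Qed.

Lemma dotv_mulmx n k (y : 'rV[R]_k) (v : 'rV[R]_n) (J : 'M[R]_(n, k)) :
  dotv y (v *m J) = dotv (y *m J^T) v.
Proof. by rewrite !dotvE trmx_mul mulmxA. Qed.

Lemma dotvDr k (y u v : 'rV[R]_k) : dotv y (u + v) = dotv y u + dotv y v.
Proof. by rewrite -big_split; apply: eq_bigr => i _; rewrite mxE mulrDr. Qed.

Lemma dotvr0 k (y : 'rV[R]_k) : dotv y 0 = 0.
Proof. by apply: big1 => i _; rewrite mxE mulr0. Qed.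

Lemma ler_dotv k (y u v : 'rV[R]_k) :
  vnonneg y -> (forall i, u 0 i <= v 0 i) -> dotv y u <= dotv y v.
Proof. by move=> y0 uv; apply: ler_sum => i _; apply: ler_wpM2l. Qed.

Lemma norm1_ge0 k (v : 'rV[R]_k) : 0 <= norm1 v.
Proof. exact: sumr_ge0. Qed.

Lemma coord_le_norminf k (v : 'rV[R]_k) i : `|v 0 i| <= norminf v.
Proof. by rewrite /norminf (bigD1 i) //= le_max lexx. Qed.

Lemma norminfN k (v : 'rV[R]_k) : norminf (- v) = norminf v.
Proof. by apply: eq_bigr => i _; rewrite mxE normrN. Qed.

Lemma norm_dotv_le k (u v : 'rV[R]_k) : `|dotv u v| <= norm1 u * norminf v.
Proof.
rewrite /norm1 mulr_suml; apply: le_trans (ler_norm_sum _ _ _) _.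
by apply: ler_sum => i _; rewrite normrM ler_wpM2l ?coord_le_norminf.
Qed.

End DotProduct.

Section ConvexFirstOrder.
Variable R : realType.

Lemma convex_derive_le (V : normedModType R) (f : V -> R) (x v : V) :
  convex_function setT f -> derivable f x v -> 'D_v f x <= f (v + x) - f x.
Proof.
move=> cvx df.
have Dq : (fun h : R => h^-1 *: ((f \o shift x) (h *: v) - f x)) @ 0^'+
    --> 'D_v f x.
  exact: cvg_dnbhs_at_right.
apply: (cvgr_to_le Dq); near=> h.
have h0 : 0 < h by near: h; exact: nbhs_right_gt.
have h1 : h < 1 by near: h; exact: nbhs_right_lt.
have := cvx (Itv01 (ltW h0) (ltW h1)) (v + x) x.
rewrite !inE /= => /(_ I I) cvx_h.
have chord : f (h *: v + x) <= h * f (v + x) + (1 - h) * f x.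
  suff -> : h *: v + x = h *: (v + x) + (1 - h) *: x by [].
  by rewrite scalerDr scalerBl scale1r -addrA [h *: x + _]addrC subrK.
rewrite /= -[_ *: _]/(h^-1 * _) mulrC ler_pdivrMr //; lra.
Unshelve. all: by end_near.
Qed.

Lemma is_derive_coord (V : normedModType R) p q (a : V -> 'M[R]_(p, q))
    x v i j :
  derivable a x v -> is_derive x v (fun z => a z i j) ('D_v a x i j).
Proof.
move=> da.
have Dq : (fun h : R => h^-1 *: (a (h *: v + x) i j - a x i j)) @ 0^'
    --> 'D_v a x i j.
  have -> : (fun h : R => h^-1 *: (a (h *: v + x) i j - a x i j)) =
      (fun M => M i j) \o (fun h : R => h^-1 *: ((a \o shift x) (h *: v) - a x)).
    by apply/funext => h /=; rewrite !mxE.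
  exact: continuous_cvg (@coord_continuous _ _ _ i j _) da.
by split; [apply/cvg_ex; exists ('D_v a x i j) | apply: cvg_lim].
Qed.

Lemma convex_jacobian_le n m (a : 'rV[R]_n -> 'rV[R]_m) (y : 'rV[R]_m)
    (x x' : 'rV[R]_n) :
  differentiable a x ->
  (forall i, convex_function setT (fun z : 'rV[R]_n => a z 0 i)) ->
  vnonneg y ->
  dotv y (a x) + dotv y ((x' - x) *m 'J a x) <= dotv y (a x').
Proof.
move=> da cvx y0; rewrite -deriveEjacobian // -dotvDr.
apply: ler_dotv => // i; rewrite mxE.
have [der_i <-] := is_derive_coord 0 i (diff_derivable (v := x' - x) da).
have := convex_derive_le (cvx i) der_i; rewrite subrK; lra.
Qed.

End ConvexFirstOrder.

Lemma minimizer_nonpos (R : realType) n m (a : 'rV[R]_n -> 'rV[R]_m)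
    (w : 'rV[R]_m) mu (xs : 'rV[R]_n) (ss : 'rV[R]_m) :
  (exists z, forall i, a z 0 i <= 0) ->
  is_minimizer a w mu xs ss -> forall i, a xs 0 i <= 0.
Proof.
move=> [z az_le0] [[feas_eq [ss0 mu_ge0]] mu_min] i.
have mu_le0 : mu <= 0.
  apply: (mu_min 0 z (- a z)); split; first by rewrite subrr scale0r.
  by split => // j; rewrite mxE oppr_ge0.
have mu0 : mu = 0 by apply/le_anti; rewrite mu_le0.
move/(congr1 (fun M : 'rV[R]_m => M 0 i)): feas_eq.
rewrite mu0 scale0r !mxE => feas_i.
by have := ss0 i; lra.
Qed.

Lemma Gamma_far_le_half (R : realType) n m (a : 'rV[R]_n -> 'rV[R]_m) x y
    (Rad : R) :
  0 < dotv y (a x) -> 0 < Rad -> Gamma_far a x y <= 1 / (2 * Rad) ->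
  norm1 (y *m ('J a x)^T) * Rad <= dotv y (a x) / 2.
Proof.
move=> g_gt0 Rad_gt0; rewrite /Gamma_far ler_pdivrMr // => Gam.
have -> : dotv y (a x) / 2 = 1 / (2 * Rad) * dotv y (a x) * Rad.
  by field; rewrite gt_eqF.
by rewrite ler_wpM2r // ltW.
Qed.

Theorem mainTheorem8 (R : realType) (n m : nat) (a : 'rV[R]_n -> 'rV[R]_m)
  (w : 'rV[R]_m) (x : 'rV[R]_n) (s y : 'rV[R]_m) (Rad : R) :
  (forall z, differentiable a z) ->
  (forall i : 'I_m, convex_function setT (fun z : 'rV[R]_n => a z 0 i)) ->
  vnonneg w ->
  vnonneg s -> vnonneg y ->
  0 < dotv y (a x) ->
  0 < Rad ->
  Gamma_far a x y <= 1 / (2 * Rad) ->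
  (exists (mu_star : R) (x_star : 'rV[R]_n) (s_star : 'rV[R]_m),
      is_minimizer a w mu_star x_star s_star /\ norminf (x - x_star) <= Rad) ->
  ~ (exists z : 'rV[R]_n, forall i : 'I_m, a z 0 i <= 0).
Proof.
move=> da cvx _ _ y0 g_gt0 Rad_gt0 Gam [mu [xs [ss [min_xs dist_xs]]]] a_le0.
have g_xs_le0 : dotv y (a xs) <= 0.
  rewrite -(dotvr0 y); apply: ler_dotv => // i.
  by rewrite mxE; exact: minimizer_nonpos a_le0 min_xs i.
have first_order := convex_jacobian_le xs (da x) cvx y0.
have hoelder := norm_dotv_le (y *m ('J a x)^T) (xs - x).
rewrite -dotv_mulmx in hoelder.
have dist_le : norm1 (y *m ('J a x)^T) * norminf (xs - x)
    <= norm1 (y *m ('J a x)^T) * Rad.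
  by rewrite ler_wpM2l ?norm1_ge0 // -norminfN opprB.
have half := Gamma_far_le_half g_gt0 Rad_gt0 Gam.
have lower := lerNnormlW hoelder.
lra.
Qed.
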